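(* Let $A$, $B$, $C$ be payoff Conway games and let $\sigma$ be a winning strategy on $A^*\otimes B$ and $\tau$ a winning strategy on $B^*\otimes C$. Then the composite strategy $\sigma;\tau$ on $A^*\otimes C$ is also winning.
   Context: A Conway game $A=(V_A,E_A,\lambda_A)$ is a rooted directed graph $(V_A,E_A)$ with root $\star_A$ together with a polarity map $\lambda_A:E_A\to\{-1,+1\}$ on moves ($-1$ = Opponent, $+1$ = Player). A path is a finite sequence of consecutive moves $x_0\to x_1\to\cdots\to x_k$, written $s:x_0\twoheadrightarrow x_k$; $\epsilon_x:x\twoheadrightarrow x$ is the empty path at $x$; $s;t$ denotes concatenation; $\mathrm{Path}_A$ is the set of paths. A play is a path starting at $\star_A$; it is alternating if consecutive moves have opposite polarities. A strategy $\sigma$ on $A$ is a set of alternating plays of even length that contains the empty play, whose nonempty plays start with an Opponent move, which is closed under even-length prefixes ($s\cdot m\cdot n\in\sigma\Rightarrow s\in\sigma$), and which is deterministic ($s\cdot m\cdot n\in\sigma$ and $s\cdot m\cdot n'\in\sigma$ imply $n=n'$). A payoff Conway game is a Conway game together with a payoff $\kappa_A=(\kappa_A^+,\kappa_A^-):\mathrm{Path}_A\to\mathbb{N}\times\mathbb{N}$ satisfying: (compatibility) for every move $m$, $\lambda_A(m)=-1\Rightarrow\kappa_A^+(m)=0$ and $\lambda_A(m)=+1\Rightarrow\kappa_A^-(m)=0$; (suffix domination) $\kappa_A(t)\le\kappa_A(s;t)$ for $s:x\twoheadrightarrow y$, $t:y\twoheadrightarrow z$; (subadditivity) $\kappa_A(s;t)\le\kappa_A(s)+\kappa_A(t)$;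 (norm) $\kappa_A(\epsilon_x)=(0,0)$; here $\le$ and $+$ on $\mathbb{N}\times\mathbb{N}$ are componentwise. Dual: $A^*=(V_A,E_A,-\lambda_A,(\kappa_A^-,\kappa_A^+))$. Tensor $A\otimes B$: positions $V_A\times V_B$ with root $(\star_A,\star_B)$; moves $(x,y)\to(x',y)$ for $(x,x')\in E_A$ and $(x,y)\to(x,y')$ for $(y,y')\in E_B$, with the polarity of the underlying move; payoff $\kappa_{A\otimes B}(s)=\kappa_A(s_{|A})+\kappa_B(s_{|B})$, where $s_{|A}$, $s_{|B}$ are the projections of $s$. A strategy $\sigma$ plays a path $t:x\twoheadrightarrow y$ if there is a play $s:\star\twoheadrightarrow x$ in $\sigma$ with $s;t\in\sigma$. A strategy is winning if every path $s$ it plays satisfies $\kappa^+(s)=0\Rightarrow\kappa^-(s)=0$. Composition: an interaction $u\in int(A,B,C)$ is a sequence of moves of $A$, $B$, $C$ whose projections on $A^*\otimes B$, $B^*\otimes C$ and $A^*\otimes C$ are plays; for $\sigma$ on $A^*\otimes B$ and $\tau$ on $B^*\otimes C$, $\sigma;\tau=\{u_{|A,C}\mid u\in int(A,B,C),\ u_{|A,B}\in\sigma,\ u_{|B,C}\in\tau\}$. *)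

From Stdlib Require Import List Arith.
Import ListNotations.
Set Implicit Arguments.

(** Moves are an abstract type [E] of edges
    (a multigraph) with source/target positions; polarity [pol m = true]
    means Player (+1), [false] means Opponent (-1).
    A path [x ->> z] is represented by its start position [x] and its list
    of moves; the payoff [(kp x s, km x s)] is its value on such a path. *)
Record game := Game {
  V : Type;
  E : Type;
  src : E -> V;
  tgt : E -> V;
  root : V;
  pol : E -> bool;
  kp : V -> list E -> nat;
  km : V -> list E -> nat
}.

Fixpoint is_path (G : game) (x : V G) (s : list (E G)) : Prop :=
  match s with
  | [] => True
  | m :: s' => src G m = x /\ is_path G (tgt G m) s'
  end.

Fixpoint endv (G : game) (x : V G) (s : list (E G)) : V G :=
  match s with
  | [] => x
  | m :: s' => endv G (tgt G m) s'
  end.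

Definition is_play (G : game) (s : list (E G)) : Prop := is_path G (root G) s.

Fixpoint alternating (G : game) (s : list (E G)) : Prop :=
  match s with
  | m :: ((n :: _) as s') => pol G m <> pol G n /\ alternating G s'
  | _ => True
  end.

Definition payoff_game (G : game) : Prop :=
  (forall m : E G, pol G m = false -> kp G (src G m) [m] = 0) /\
  (forall m : E G, pol G m = true -> km G (src G m) [m] = 0) /\
  (forall (x : V G) (s t : list (E G)),
      is_path G x s -> is_path G (endv G x s) t ->
      kp G (endv G x s) t <= kp G x (s ++ t) /\
      km G (endv G x s) t <= km G x (s ++ t)) /\
  (forall (x : V G) (s t : list (E G)),
      is_path G x s -> is_path G (endv G x s) t ->
      kp G x (s ++ t) <= kp G x s + kp G (endv G x s) t /\
      km G x (s ++ t) <= km G x s + km G (endv G x s) t) /\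
  (forall x : V G, kp G x [] = 0 /\ km G x [] = 0).

Definition dual (G : game) : game :=
  Game (src G) (tgt G) (root G) (fun m => negb (pol G m)) (km G) (kp G).

(** Tensor A (x) B.  A move (x,y) -> (x',y) coming from the A-move m is
    [inl (m, y)]; a move (x,y) -> (x,y') coming from the B-move n is
    [inr (x, n)]. *)
Section Tensor.
Variables G H : game.

Definition tE : Type := ((E G * V H) + (V G * E H))%type.

Definition t_src (e : tE) : V G * V H :=
  match e with inl (m, y) => (src G m, y) | inr (x, n) => (x, src H n) end.
Definition t_tgt (e : tE) : V G * V H :=
  match e with inl (m, y) => (tgt G m, y) | inr (x, n) => (x, tgt H n) end.
Definition t_pol (e : tE) : bool :=
  match e with inl (m, _) => pol G m | inr (_, n) => pol H n end.

Fixpoint projL (s : list tE) : list (E G) :=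
  match s with
  | [] => []
  | inl (m, _) :: s' => m :: projL s'
  | inr _ :: s' => projL s'
  end.
Fixpoint projR (s : list tE) : list (E H) :=
  match s with
  | [] => []
  | inl _ :: s' => projR s'
  | inr (_, n) :: s' => n :: projR s'
  end.

Definition tensor : game :=
  Game t_src t_tgt (root G, root H) t_pol
    (fun p s => kp G (fst p) (projL s) + kp H (snd p) (projR s))
    (fun p s => km G (fst p) (projL s) + km H (snd p) (projR s)).

(** Turn a sequence of moves of G and H (with [None] for moves of other
    games, which are ignored) into a sequence of moves of [tensor],
    tracking the current positions (x, y). *)
Fixpoint tproj (x : V G) (y : V H) (l : list (option (E G + E H)))
  : list (E tensor) :=
  match l with
  | [] => []
  | None :: l' => tproj x y l'
  | Some (inl m) :: l' => inl (m, y) :: tproj (tgt G m) y l'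
  | Some (inr n) :: l' => inr (x, n) :: tproj x (tgt H n) l'
  end.
End Tensor.

Definition strategy (G : game) (sigma : list (E G) -> Prop) : Prop :=
  (forall s, sigma s ->
     is_play G s /\ alternating G s /\ Nat.Even (length s)) /\
  sigma [] /\
  (forall m s, sigma (m :: s) -> pol G m = false) /\
  (forall s m n, sigma (s ++ [m; n]) -> sigma s) /\
  (forall s m n n', sigma (s ++ [m; n]) -> sigma (s ++ [m; n']) -> n = n').

Definition plays (G : game) (sigma : list (E G) -> Prop)
    (x : V G) (t : list (E G)) : Prop :=
  exists s, sigma s /\ endv G (root G) s = x /\ sigma (s ++ t).

Definition winning (G : game) (sigma : list (E G) -> Prop) : Prop :=
  forall x t, plays G sigma x t -> kp G x t = 0 -> km G x t = 0.

Section Composition.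
Variables A B C : game.

Definition imove : Type := ((E A + E B) + E C)%type.

Definition selAB (e : imove) : option (E (dual A) + E B) :=
  match e with inl (inl a) => Some (inl a) | inl (inr b) => Some (inr b)
             | inr _ => None end.
Definition selBC (e : imove) : option (E (dual B) + E C) :=
  match e with inl (inl _) => None | inl (inr b) => Some (inl b)
             | inr c => Some (inr c) end.
Definition selAC (e : imove) : option (E (dual A) + E C) :=
  match e with inl (inl a) => Some (inl a) | inl (inr _) => None
             | inr c => Some (inr c) end.

Definition projAB (u : list imove) : list (E (tensor (dual A) B)) :=
  tproj (dual A) B (root A) (root B) (map selAB u).
Definition projBC (u : list imove) : list (E (tensor (dual B) C)) :=
  tproj (dual B) C (root B) (root C) (map selBC u).
Definition projAC (u : list imove) : list (E (tensor (dual A) C)) :=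
  tproj (dual A) C (root A) (root C) (map selAC u).

Definition interaction (u : list imove) : Prop :=
  is_play (tensor (dual A) B) (projAB u) /\
  is_play (tensor (dual B) C) (projBC u) /\
  is_play (tensor (dual A) C) (projAC u).

Definition compose (sigma : list (E (tensor (dual A) B)) -> Prop)
    (tau : list (E (tensor (dual B) C)) -> Prop)
    : list (E (tensor (dual A) C)) -> Prop :=
  fun s => exists u, interaction u /\ sigma (projAB u) /\
                     tau (projBC u) /\ s = projAC u.
End Composition.

From Stdlib Require Import List Arith Lia.
Import ListNotations.
Set Implicit Arguments.

(** Let [u] be an interaction whose projections are played by [sigma] and
    [tau], and [w] a suffix of [u].  If Opponent earns nothing on the external
    parts of [w] ([kappa^-] on [A], [kappa^+] on [C]), then all six payoffs of
    [w] vanish; for the suffix of [u] that projects onto a path [t] played by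
    [sigma;tau], this is the winning condition.  The claim is proved backwards
    along [w], one move at a time.  By compatibility and subadditivity a move
    adds nothing to the payoff of the side that did not play it.  A Player move
    of [A] or [C], and any move of [B], is an Opponent move of [A^* (x) B] or of
    [B^* (x) C]; it is then preceded by a play of the corresponding strategy,
    which therefore plays the rest of the interaction, and its winning
    condition transfers the vanishing of the payoffs. *)

Lemma is_path_app (G : game) x s t :
  is_path G x (s ++ t) <-> is_path G x s /\ is_path G (endv G x s) t.
Proof.
  revert x; induction s as [|m s IH]; intros x; simpl.
  - tauto.
  - rewrite IH; tauto.
Qed.

Lemma endv_app (G : game) x s t : endv G x (s ++ t) = endv G (endv G x s) t.
Proof. revert x; induction s; intros; simpl; auto. Qed.

Lemma is_path_dual (G : game) x s : is_path (dual G) x s <-> is_path G x s.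
Proof. revert x; induction s; intros; simpl; try rewrite IHs; tauto. Qed.

Lemma endv_dual (G : game) x s : endv (dual G) x s = endv G x s.
Proof. revert x; induction s; intros; simpl; auto. Qed.

Section PayoffCons.
Variable G : game.
Hypothesis PG : payoff_game G.

Lemma kp_cons_suffix x m s :
  is_path G x (m :: s) -> kp G (tgt G m) s <= kp G x (m :: s).
Proof.
  intros [Hsrc Hs]. destruct PG as (_ & _ & Hsuf & _).
  apply (Hsuf x [m] s); simpl; auto.
Qed.

Lemma km_cons_suffix x m s :
  is_path G x (m :: s) -> km G (tgt G m) s <= km G x (m :: s).
Proof.
  intros [Hsrc Hs]. destruct PG as (_ & _ & Hsuf & _).
  apply (Hsuf x [m] s); simpl; auto.
Qed.

Lemma kp_cons_opponent x m s :
  is_path G x (m :: s) -> pol G m = false -> kp G x (m :: s) = kp G (tgt G m) s.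
Proof.
  intros Hp Hpol. pose proof (kp_cons_suffix Hp) as Hsuf.
  destruct Hp as [Hsrc Hs]. destruct PG as (Hcomp & _ & _ & Hsub & _).
  destruct (Hsub x [m] s) as [Hle _]; simpl; auto.
  subst x. simpl in Hle. rewrite (Hcomp m Hpol) in Hle. lia.
Qed.

Lemma km_cons_player x m s :
  is_path G x (m :: s) -> pol G m = true -> km G x (m :: s) = km G (tgt G m) s.
Proof.
  intros Hp Hpol. pose proof (km_cons_suffix Hp) as Hsuf.
  destruct Hp as [Hsrc Hs]. destruct PG as (_ & Hcomp & _ & Hsub & _).
  destruct (Hsub x [m] s) as [_ Hle]; simpl; auto.
  subst x. simpl in Hle. rewrite (Hcomp m Hpol) in Hle. lia.
Qed.

End PayoffCons.

Lemma alternating_pol (G : game) P e Q :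
  alternating G (P ++ e :: Q) -> pol G e = xorb (pol G (hd e P)) (Nat.odd (length P)).
Proof.
  induction P as [|m P IH]; intros Halt; simpl.
  - destruct (pol G e); reflexivity.
  - assert (Hstep : pol G m <> pol G (hd e P) /\ alternating G (P ++ e :: Q))
      by (destruct P; exact Halt).
    destruct Hstep as [Hne Halt'].
    rewrite (IH Halt'), Nat.odd_succ, <- Nat.negb_odd.
    destruct (pol G m), (pol G (hd e P)), (Nat.odd (length P)); simpl; congruence.
Qed.

Section Strategy.
Variables (G : game) (sg : list (E G) -> Prop).
Hypothesis Hsg : strategy G sg.

Lemma strategy_pol {P e Q} : sg (P ++ e :: Q) -> pol G e = Nat.odd (length P).
Proof.
  intros HPQ. destruct Hsg as (Hplay & _ & Hfirst & _).
  destruct (Hplay _ HPQ) as (_ & Halt & _).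
  rewrite (alternating_pol _ _ _ _ Halt).
  assert (Hhd : pol G (hd e P) = false) by (destruct P; eapply Hfirst; exact HPQ).
  rewrite Hhd. reflexivity.
Qed.

Lemma strategy_prefix_even {P Q} : sg (P ++ Q) -> Nat.Even (length P) -> sg P.
Proof.
  intros HPQ HP. destruct Hsg as (Hplay & _ & _ & Hpre & _).
  assert (HQ : Nat.Even (length Q)).
  { destruct (Hplay _ HPQ) as (_ & _ & Hev). rewrite length_app in Hev.
    exact (Nat.Even_add_Even_inv_r _ _ Hev HP). }
  destruct HQ as [n Hn]. revert Q HPQ Hn.
  induction n as [|n IH]; intros Q HPQ Hn.
  - destruct Q; [rewrite app_nil_r in HPQ; exact HPQ | simpl in Hn; lia].
  - destruct (exists_last (l := Q)) as (Q1 & k & ->); [intros ->; simpl in Hn; lia|].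
    destruct (exists_last (l := Q1)) as (Q2 & m & ->); [intros ->; simpl in Hn; lia|].
    apply (IH Q2).
    + apply (Hpre _ m k). rewrite <- !app_assoc in HPQ |- *. exact HPQ.
    + rewrite !length_app in Hn. simpl in Hn. lia.
Qed.

Lemma strategy_prefix_opponent {P e Q} : sg (P ++ e :: Q) -> pol G e = false -> sg P.
Proof.
  intros HPQ Hpol. apply (strategy_prefix_even HPQ).
  apply Nat.even_spec. rewrite <- Nat.negb_odd, <- (strategy_pol HPQ), Hpol.
  reflexivity.
Qed.

End Strategy.

Fixpoint lefts {X Y : Type} (l : list (option (X + Y))) : list X :=
  match l with
  | [] => []
  | Some (inl x) :: l' => x :: lefts l'
  | _ :: l' => lefts l'
  end.

Fixpoint rights {X Y : Type} (l : list (option (X + Y))) : list Y :=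
  match l with
  | [] => []
  | Some (inr y) :: l' => y :: rights l'
  | _ :: l' => rights l'
  end.

Section TensorProjection.
Variables G H : game.

Lemma projL_tproj x y l : projL (tproj G H x y l) = lefts l.
Proof.
  revert x y; induction l as [|[[m|n]|] l IH]; intros; simpl; try rewrite IH; auto.
Qed.

Lemma projR_tproj x y l : projR (tproj G H x y l) = rights l.
Proof.
  revert x y; induction l as [|[[m|n]|] l IH]; intros; simpl; try rewrite IH; auto.
Qed.

Lemma kp_tproj x y l :
  kp (tensor G H) (x, y) (tproj G H x y l) = kp G x (lefts l) + kp H y (rights l).
Proof. simpl. rewrite projL_tproj, projR_tproj. reflexivity. Qed.

Lemma km_tproj x y l :
  km (tensor G H) (x, y) (tproj G H x y l) = km G x (lefts l) + km H y (rights l).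
Proof. simpl. rewrite projL_tproj, projR_tproj. reflexivity. Qed.

Lemma winning_tproj {sg : list (E (tensor G H)) -> Prop} {x y l} :
  winning (tensor G H) sg -> plays (tensor G H) sg (x, y) (tproj G H x y l) ->
  kp G x (lefts l) + kp H y (rights l) = 0 -> km G x (lefts l) + km H y (rights l) = 0.
Proof.
  intros Hwin Hplays Hk. rewrite <- km_tproj. apply (Hwin _ _ Hplays).
  rewrite kp_tproj. exact Hk.
Qed.

Lemma endv_tproj x y l :
  endv (tensor G H) (x, y) (tproj G H x y l) = (endv G x (lefts l), endv H y (rights l)).
Proof.
  revert x y; induction l as [|[[m|n]|] l IH]; intros; simpl; try rewrite IH; auto.
Qed.

Lemma is_path_tproj x y l :
  is_path (tensor G H) (x, y) (tproj G H x y l) ->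
  is_path G x (lefts l) /\ is_path H y (rights l).
Proof.
  revert x y; induction l as [|[[m|n]|] l IH]; intros x y Hp; simpl in *; auto.
  - destruct Hp as [Hsrc Hp]. injection Hsrc as ->.
    destruct (IH _ _ Hp); auto.
  - destruct Hp as [Hsrc Hp]. injection Hsrc as ->.
    destruct (IH _ _ Hp); auto.
Qed.

Lemma tproj_app x y l1 l2 :
  tproj G H x y (l1 ++ l2) =
  tproj G H x y l1 ++ tproj G H (endv G x (lefts l1)) (endv H y (rights l1)) l2.
Proof.
  revert x y; induction l1 as [|[[m|n]|] l IH]; intros; simpl; try rewrite IH; auto.
Qed.

Lemma tproj_eq_app x y l s t :
  tproj G H x y l = s ++ t ->
  exists l1 l2, l = l1 ++ l2 /\ s = tproj G H x y l1 /\
    t = tproj G H (endv G x (lefts l1)) (endv H y (rights l1)) l2.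
Proof.
  revert x y s; induction l as [|o l IH]; intros x y s Heq.
  - destruct s; [|discriminate]. exists [], []; auto.
  - destruct s as [|e s]; [exists [], (o :: l); auto|].
    destruct o as [[m|n]|]; simpl in Heq.
    + injection Heq as <- Ht. destruct (IH _ _ _ Ht) as (l1 & l2 & -> & -> & ->).
      exists (Some (inl m) :: l1), l2; auto.
    + injection Heq as <- Ht. destruct (IH _ _ _ Ht) as (l1 & l2 & -> & -> & ->).
      exists (Some (inr n) :: l1), l2; auto.
    + destruct (IH _ _ (e :: s) Heq) as (l1 & l2 & -> & -> & ->).
      exists (None :: l1), l2; auto.
Qed.

End TensorProjection.

Section Interaction.
Variables A B C : game.

Fixpoint movesA (u : list (imove A B C)) : list (E A) :=
  match u with [] => [] | inl (inl a) :: u' => a :: movesA u' | _ :: u' => movesA u' end.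
Fixpoint movesB (u : list (imove A B C)) : list (E B) :=
  match u with [] => [] | inl (inr b) :: u' => b :: movesB u' | _ :: u' => movesB u' end.
Fixpoint movesC (u : list (imove A B C)) : list (E C) :=
  match u with [] => [] | inr c :: u' => c :: movesC u' | _ :: u' => movesC u' end.

Definition posA u : V A := endv A (root A) (movesA u).
Definition posB u : V B := endv B (root B) (movesB u).
Definition posC u : V C := endv C (root C) (movesC u).

Lemma lefts_selAB u : lefts (map (@selAB A B C) u) = movesA u.
Proof.
  induction u as [|[[a|b]|c] u IH]; simpl; first [reflexivity | exact IH | f_equal; exact IH].
Qed.

Lemma rights_selAB u : rights (map (@selAB A B C) u) = movesB u.
Proof.
  induction u as [|[[a|b]|c] u IH]; simpl; first [reflexivity | exact IH | f_equal; exact IH].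
Qed.

Lemma lefts_selBC u : lefts (map (@selBC A B C) u) = movesB u.
Proof.
  induction u as [|[[a|b]|c] u IH]; simpl; first [reflexivity | exact IH | f_equal; exact IH].
Qed.

Lemma rights_selBC u : rights (map (@selBC A B C) u) = movesC u.
Proof.
  induction u as [|[[a|b]|c] u IH]; simpl; first [reflexivity | exact IH | f_equal; exact IH].
Qed.

Lemma lefts_selAC u : lefts (map (@selAC A B C) u) = movesA u.
Proof.
  induction u as [|[[a|b]|c] u IH]; simpl; first [reflexivity | exact IH | f_equal; exact IH].
Qed.

Lemma rights_selAC u : rights (map (@selAC A B C) u) = movesC u.
Proof.
  induction u as [|[[a|b]|c] u IH]; simpl; first [reflexivity | exact IH | f_equal; exact IH].
Qed.

Lemma movesA_app p q : movesA (p ++ q) = movesA p ++ movesA q.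
Proof. induction p as [|[[a|b]|c] p IH]; simpl; try rewrite IH; reflexivity. Qed.

Lemma movesB_app p q : movesB (p ++ q) = movesB p ++ movesB q.
Proof. induction p as [|[[a|b]|c] p IH]; simpl; try rewrite IH; reflexivity. Qed.

Lemma movesC_app p q : movesC (p ++ q) = movesC p ++ movesC q.
Proof. induction p as [|[[a|b]|c] p IH]; simpl; try rewrite IH; reflexivity. Qed.

Lemma posA_app p q : posA (p ++ q) = endv A (posA p) (movesA q).
Proof. unfold posA. rewrite movesA_app. apply endv_app. Qed.

Lemma posB_app p q : posB (p ++ q) = endv B (posB p) (movesB q).
Proof. unfold posB. rewrite movesB_app. apply endv_app. Qed.

Lemma posC_app p q : posC (p ++ q) = endv C (posC p) (movesC q).
Proof. unfold posC. rewrite movesC_app. apply endv_app. Qed.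

Lemma projAB_app p w :
  projAB (p ++ w) = projAB p ++ tproj (dual A) B (posA p) (posB p) (map (@selAB A B C) w).
Proof.
  unfold projAB. rewrite map_app, tproj_app, endv_dual, lefts_selAB, rights_selAB.
  reflexivity.
Qed.

Lemma projBC_app p w :
  projBC (p ++ w) = projBC p ++ tproj (dual B) C (posB p) (posC p) (map (@selBC A B C) w).
Proof.
  unfold projBC. rewrite map_app, tproj_app, endv_dual, lefts_selBC, rights_selBC.
  reflexivity.
Qed.

Lemma endv_projAB p :
  endv (tensor (dual A) B) (root (tensor (dual A) B)) (projAB p) = (posA p, posB p).
Proof.
  etransitivity; [apply endv_tproj|].
  rewrite endv_dual, lefts_selAB, rights_selAB. reflexivity.
Qed.

Lemma endv_projBC p :
  endv (tensor (dual B) C) (root (tensor (dual B) C)) (projBC p) = (posB p, posC p).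
Proof.
  etransitivity; [apply endv_tproj|].
  rewrite endv_dual, lefts_selBC, rights_selBC. reflexivity.
Qed.

Lemma endv_projAC p :
  endv (tensor (dual A) C) (root (tensor (dual A) C)) (projAC p) = (posA p, posC p).
Proof.
  etransitivity; [apply endv_tproj|].
  rewrite endv_dual, lefts_selAC, rights_selAC. reflexivity.
Qed.

Lemma projAC_eq_app u s t :
  s ++ t = projAC u ->
  exists p w, u = p ++ w /\ s = projAC p /\
    t = tproj (dual A) C (posA p) (posC p) (map (@selAC A B C) w).
Proof.
  intros Hst. symmetry in Hst. apply tproj_eq_app in Hst as (l1 & l2 & Hl & -> & ->).
  apply map_eq_app in Hl as (p & w & -> & <- & <-).
  exists p, w. rewrite endv_dual, lefts_selAC, rights_selAC. auto.
Qed.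

Lemma interaction_paths u :
  interaction u ->
  is_path A (root A) (movesA u) /\ is_path B (root B) (movesB u) /\
  is_path C (root C) (movesC u).
Proof.
  intros (HAB & HBC & _).
  apply is_path_tproj in HAB as [HA HB]. apply is_path_tproj in HBC as [_ HC].
  rewrite is_path_dual, lefts_selAB in HA. rewrite rights_selAB in HB.
  rewrite rights_selBC in HC. auto.
Qed.

Lemma interaction_suffix_paths {u p w} :
  interaction u -> u = p ++ w ->
  is_path A (posA p) (movesA w) /\ is_path B (posB p) (movesB w) /\
  is_path C (posC p) (movesC w).
Proof.
  intros Hu ->. destruct (interaction_paths Hu) as (HA & HB & HC).
  rewrite movesA_app, is_path_app in HA. rewrite movesB_app, is_path_app in HB.
  rewrite movesC_app, is_path_app in HC.
  split; [|split]; [apply HA | apply HB | apply HC].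
Qed.

Section Composition.
Variables (sigma : list (E (tensor (dual A) B)) -> Prop)
  (tau : list (E (tensor (dual B) C)) -> Prop).
Hypotheses (PA : payoff_game A) (PB : payoff_game B) (PC : payoff_game C)
  (Ss : strategy (tensor (dual A) B) sigma) (Ws : winning (tensor (dual A) B) sigma)
  (St : strategy (tensor (dual B) C) tau) (Wt : winning (tensor (dual B) C) tau).
Variable u : list (imove A B C).
Hypotheses (Hu : interaction u) (Hsu : sigma (projAB u)) (Htu : tau (projBC u)).

Lemma sigma_suffix {p w} :
  u = p ++ w -> sigma (projAB p ++ tproj (dual A) B (posA p) (posB p) (map (@selAB A B C) w)).
Proof. intros ->. rewrite <- projAB_app. exact Hsu. Qed.

Lemma tau_suffix {p w} :
  u = p ++ w -> tau (projBC p ++ tproj (dual B) C (posB p) (posC p) (map (@selBC A B C) w)).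
Proof. intros ->. rewrite <- projBC_app. exact Htu. Qed.

Lemma sigma_before_player_A {p a w} :
  u = p ++ inl (inl a) :: w -> pol A a = true -> sigma (projAB p).
Proof.
  intros Hpw Hpol.
  exact (strategy_prefix_opponent Ss (sigma_suffix Hpw) (f_equal negb Hpol)).
Qed.

Lemma sigma_before_opponent_B {p b w} :
  u = p ++ inl (inr b) :: w -> pol B b = false -> sigma (projAB p).
Proof. intros Hpw Hpol. exact (strategy_prefix_opponent Ss (sigma_suffix Hpw) Hpol). Qed.

Lemma tau_before_player_B {p b w} :
  u = p ++ inl (inr b) :: w -> pol B b = true -> tau (projBC p).
Proof.
  intros Hpw Hpol.
  exact (strategy_prefix_opponent St (tau_suffix Hpw) (f_equal negb Hpol)).
Qed.

Lemma tau_before_opponent_C {p c w} :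
  u = p ++ inr c :: w -> pol C c = false -> tau (projBC p).
Proof. intros Hpw Hpol. exact (strategy_prefix_opponent St (tau_suffix Hpw) Hpol). Qed.

Lemma sigma_winning_suffix {p w} :
  u = p ++ w -> sigma (projAB p) ->
  km A (posA p) (movesA w) + kp B (posB p) (movesB w) = 0 ->
  kp A (posA p) (movesA w) + km B (posB p) (movesB w) = 0.
Proof.
  intros Hpw Hp Hk.
  assert (Hplays : plays _ sigma (posA p, posB p)
                     (tproj (dual A) B (posA p) (posB p) (map (@selAB A B C) w))).
  { exists (projAB p). split; [exact Hp | split; [apply endv_projAB | exact (sigma_suffix Hpw)]]. }
  rewrite <- lefts_selAB, <- rights_selAB in Hk |- *.
  exact (winning_tproj Ws Hplays Hk).
Qed.

Lemma tau_winning_suffix {p w} :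
  u = p ++ w -> tau (projBC p) ->
  km B (posB p) (movesB w) + kp C (posC p) (movesC w) = 0 ->
  kp B (posB p) (movesB w) + km C (posC p) (movesC w) = 0.
Proof.
  intros Hpw Hp Hk.
  assert (Hplays : plays _ tau (posB p, posC p)
                     (tproj (dual B) C (posB p) (posC p) (map (@selBC A B C) w))).
  { exists (projBC p). split; [exact Hp | split; [apply endv_projBC | exact (tau_suffix Hpw)]]. }
  rewrite <- lefts_selBC, <- rights_selBC in Hk |- *.
  exact (winning_tproj Wt Hplays Hk).
Qed.

Definition payoffs_vanish p w : Prop :=
  km A (posA p) (movesA w) = 0 -> kp C (posC p) (movesC w) = 0 ->
  kp A (posA p) (movesA w) = 0 /\ km C (posC p) (movesC w) = 0 /\
  kp B (posB p) (movesB w) = 0 /\ km B (posB p) (movesB w) = 0.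

Lemma payoffs_vanish_cons_A p a w :
  u = p ++ inl (inl a) :: w ->
  payoffs_vanish (p ++ [inl (inl a)]) w -> payoffs_vanish p (inl (inl a) :: w).
Proof.
  intros Hpw IH. unfold payoffs_vanish in *.
  rewrite posA_app, posB_app, posC_app in IH. cbn [movesA movesB movesC endv] in IH |- *.
  intros HkmA HkpC.
  destruct (interaction_suffix_paths Hu Hpw) as (HpathA & _ & _). cbn [movesA] in HpathA.
  assert (HkmA' : km A (tgt A a) (movesA w) = 0)
    by (pose proof (km_cons_suffix PA HpathA); lia).
  destruct (IH HkmA' HkpC) as (HkpA' & HkmC & HkpB & HkmB).
  repeat split; auto.
  destruct (pol A a) eqn:Hpol.
  - pose proof (sigma_winning_suffix Hpw (sigma_before_player_A Hpw Hpol)) as W.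
    cbn [movesA movesB] in W. lia.
  - rewrite (kp_cons_opponent PA HpathA Hpol). exact HkpA'.
Qed.

Lemma payoffs_vanish_cons_B p b w :
  u = p ++ inl (inr b) :: w ->
  payoffs_vanish (p ++ [inl (inr b)]) w -> payoffs_vanish p (inl (inr b) :: w).
Proof.
  intros Hpw IH. unfold payoffs_vanish in *.
  rewrite posA_app, posB_app, posC_app in IH. cbn [movesA movesB movesC endv] in IH |- *.
  intros HkmA HkpC.
  destruct (IH HkmA HkpC) as (HkpA & HkmC & HkpB' & HkmB').
  destruct (interaction_suffix_paths Hu Hpw) as (_ & HpathB & _). cbn [movesB] in HpathB.
  destruct (pol B b) eqn:Hpol.
  - assert (HkmB : km B (posB p) (b :: movesB w) = 0)
      by (rewrite (km_cons_player PB HpathB Hpol); exact HkmB').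
    pose proof (tau_winning_suffix Hpw (tau_before_player_B Hpw Hpol)) as W.
    cbn [movesB movesC] in W. repeat split; lia.
  - assert (HkpB : kp B (posB p) (b :: movesB w) = 0)
      by (rewrite (kp_cons_opponent PB HpathB Hpol); exact HkpB').
    pose proof (sigma_winning_suffix Hpw (sigma_before_opponent_B Hpw Hpol)) as W.
    cbn [movesA movesB] in W. repeat split; lia.
Qed.

Lemma payoffs_vanish_cons_C p c w :
  u = p ++ inr c :: w ->
  payoffs_vanish (p ++ [inr c]) w -> payoffs_vanish p (inr c :: w).
Proof.
  intros Hpw IH. unfold payoffs_vanish in *.
  rewrite posA_app, posB_app, posC_app in IH. cbn [movesA movesB movesC endv] in IH |- *.
  intros HkmA HkpC.
  destruct (interaction_suffix_paths Hu Hpw) as (_ & _ & HpathC). cbn [movesC] in HpathC.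
  assert (HkpC' : kp C (tgt C c) (movesC w) = 0)
    by (pose proof (kp_cons_suffix PC HpathC); lia).
  destruct (IH HkmA HkpC') as (HkpA & HkmC' & HkpB & HkmB).
  repeat split; auto.
  destruct (pol C c) eqn:Hpol.
  - rewrite (km_cons_player PC HpathC Hpol). exact HkmC'.
  - pose proof (tau_winning_suffix Hpw (tau_before_opponent_C Hpw Hpol)) as W.
    cbn [movesB movesC] in W. lia.
Qed.

Lemma interaction_payoffs_vanish {w p} : u = p ++ w -> payoffs_vanish p w.
Proof.
  revert p; induction w as [|m w IH]; intros p Hpw.
  - intros _ _. destruct PA as (_ & _ & _ & _ & nA). destruct PB as (_ & _ & _ & _ & nB).
    destruct PC as (_ & _ & _ & _ & nC). cbn [movesA movesB movesC].
    destruct (nA (posA p)), (nB (posB p)), (nC (posC p)). auto.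
  - assert (Hpw' : u = (p ++ [m]) ++ w) by (rewrite <- app_assoc; exact Hpw).
    specialize (IH _ Hpw').
    destruct m as [[a|b]|c];
      [apply payoffs_vanish_cons_A | apply payoffs_vanish_cons_B | apply payoffs_vanish_cons_C];
      assumption.
Qed.

End Composition.
End Interaction.

Theorem mainTheorem2 (A B C : game)
    (sigma : list (E (tensor (dual A) B)) -> Prop)
    (tau : list (E (tensor (dual B) C)) -> Prop) :
  payoff_game A -> payoff_game B -> payoff_game C ->
  strategy (tensor (dual A) B) sigma -> winning (tensor (dual A) B) sigma ->
  strategy (tensor (dual B) C) tau -> winning (tensor (dual B) C) tau ->
  winning (tensor (dual A) C) (@compose A B C sigma tau).
Proof.
  intros PA PB PC Ss Ws St Wt x t (s & _ & Hx & u & Hu & Hsu & Htu & Hst) Hkp.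
  apply projAC_eq_app in Hst as (p & w & Hpw & -> & ->).
  rewrite endv_projAC in Hx. subst x.
  cbn [kp km tensor dual fst snd] in Hkp |- *.
  rewrite projL_tproj, projR_tproj, lefts_selAC, rights_selAC in Hkp |- *.
  destruct (interaction_payoffs_vanish PA PB PC Ss Ws St Wt Hu Hsu Htu Hpw)
    as (HkpA & HkmC & _); lia.
Qed.
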